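(* Let $T$ be a tree. Then $\phi(K_1\nabla T)=\lfloor v(T)/2\rfloor$.
   Context: $v(T)$ is the number of vertices of $T$; $K_1\nabla T$ is obtained from $T$ by adding a new vertex adjacent to all vertices of $T$. For a graph $G$, $\phi(G)$ is the maximum number of pairwise edge-disjoint cycles in $G$. *)

From mathcomp Require Import all_boot.
Set Implicit Arguments. Unset Strict Implicit. Unset Printing Implicit Defensive.

Section Graphs.
Variable V : finType.

Definition simple_graph (e : rel V) : Prop := symmetric e /\ irreflexive e.

Definition gcycle (e : rel V) (c : seq V) : bool :=
  [&& 3 <= size c, uniq c & cycle e c].

Definition cycle_edges (c : seq V) : {set {set V}} :=
  [set [set x; next c x] | x in c].

Definition edge_disjoint_cycles (e : rel V) (cs : seq (seq V)) : Prop :=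
  all (gcycle e) cs /\
  pairwise (fun c d => [disjoint cycle_edges c & cycle_edges d]) cs.

Definition has_cycle_packing (e : rel V) (k : nat) : Prop :=
  exists cs, edge_disjoint_cycles e cs /\ size cs = k.

Definition is_phi (e : rel V) (k : nat) : Prop :=
  has_cycle_packing e k /\ forall k', has_cycle_packing e k' -> k' <= k.

Definition connected (e : rel V) : Prop := forall x y, connect e x y.

Definition is_tree (e : rel V) : Prop :=
  [/\ simple_graph e, 0 < #|V|, connected e & forall c, ~~ gcycle e c].

(* K_1 \nabla T: add a new vertex (None) adjacent to all vertices. *)
Definition join_K1 (e : rel V) : rel (option V) :=
  fun x y => match x, y with
             | Some a, Some b => e a b
             | None, Some _ | Some _, None => true
             | None, None => false
             end.
End Graphs.

From mathcomp Require Import all_boot.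
Set Implicit Arguments. Unset Strict Implicit. Unset Printing Implicit Defensive.

(* Every cycle of K_1 \nabla T passes through the apex, since T is acyclic, and
   it uses exactly two of the v(T) apex edges; hence at most v(T)/2 cycles can
   be edge-disjoint.  Conversely, a path of T closed up through the apex is a
   cycle, so it suffices to find floor(v(T)/2) edge-disjoint paths of T with
   pairwise distinct endpoints.  Growing T one leaf at a time, one shows that
   for every even set X of vertices there are edge-disjoint paths whose
   endpoints are exactly the vertices of X, each used once: when the new leaf
   l lies in X and is attached at p, either p is in X and [l; p] is a new path,
   or one solves the problem for X - l + p and prolongs by l the path ending
   at p. *)

Section SeqPaths.
Variable T : finType.
Implicit Types (x : T) (q c : seq T).

Definition path_edges q : seq {set T} :=
  if q is x :: s then pairmap (fun y z => [set y; z]) x s else [::].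

Definition path_ends q : seq T := if q is x :: s then [:: x; last x s] else [::].

Lemma mem_path_ends q : {subset path_ends q <= q}.
Proof. by case: q => //= x s y /[!inE] /orP [] /eqP ->; rewrite ?eqxx // -in_cons mem_last. Qed.

Lemma mem_path_edges q E x : E \in path_edges q -> x \in E -> x \in q.
Proof.
case: q => //= y s; elim: s y => //= z s IHs y.
rewrite inE => /orP [/eqP -> | /IHs Es /Es]; rewrite !inE.
  by case/orP => ->; rewrite ?orbT.
by move=> ->; rewrite orbT.
Qed.

Lemma pairmap_fpath (R : Type) (g : T -> T -> R) (f : T -> T) x s :
  fpath f x s -> pairmap g x s = [seq g y (f y) | y <- belast x s].
Proof. by elim: s x => //= y s IHs x /andP [/eqP <- /IHs ->]. Qed.

Lemma cycle_edges_cons x c :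
  uniq (x :: c) -> cycle_edges (x :: c) =i path_edges (x :: rcons c x).
Proof.
move=> uc E; have := cycle_next uc; rewrite /= => /(pairmap_fpath (fun y z => [set y; z])) ->.
by rewrite belast_rcons; apply/imsetP/mapP.
Qed.

Lemma cycle_edges_rot n c : uniq c -> cycle_edges (rot n c) = cycle_edges c.
Proof.
move=> uc; apply/setP => E; apply/imsetP/imsetP => -[x xc ->]; exists x;
  by rewrite ?(next_rot n uc) ?mem_rot in xc *.
Qed.

Lemma map_Some_pmap (c : seq (option T)) : None \notin c -> c = map Some (pmap id c).
Proof. by elim: c => [|[x|] c IHc] //=; rewrite inE ?eqxx // => /IHc {1}->. Qed.

End SeqPaths.

Arguments path_edges {T} q.
Arguments path_ends {T} q.

Lemma path_edges_map (T T' : finType) (f : T -> T') (q : seq T) :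
  path_edges (map f q) = [seq f @: E | E : {set T} <- path_edges q].
Proof. by case: q => //= x s; elim: s x => //= y s IHs x; rewrite IHs imsetU1 imset_set1. Qed.

Section ApexCycles.
Variables (V : finType) (e : rel V).
Implicit Types (q s : seq V) (X : {set V}) (ps : seq (seq V)).

Definition simple_path (q : seq V) := [&& 1 < size q, uniq q & sorted e q].

Definition apex_cycle (q : seq V) : seq (option V) := None :: map Some q.

Definition apex_edge (x : V) : {set option V} := [set None; Some x].

Lemma apex_edge_inj : injective apex_edge.
Proof. by move=> x y /setP /(_ (Some x)); rewrite !inE eqxx /= => /esym /eqP []. Qed.

Lemma apex_edge_neq_lift x (E : {set V}) : apex_edge x != Some @: E.
Proof. by apply/eqP => /setP /(_ None); rewrite !inE eqxx => /esym /imsetP []. Qed.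

Lemma None_notin_map_Some (q : seq V) : None \notin map Some q.
Proof. by apply/mapP => -[]. Qed.

Lemma gcycle_apex_cycle q : gcycle (join_K1 e) (apex_cycle q) = simple_path q.
Proof.
case: q => [//|x s]; rewrite /gcycle /simple_path /apex_cycle /= !ltnS size_map.
rewrite (map_inj_uniq Some_inj) (mem_map Some_inj) None_notin_map_Some.
by rewrite rcons_path last_map path_map andbT.
Qed.

Lemma gcycle_map_Some c : gcycle (join_K1 e) (map Some c) = gcycle e c.
Proof. by rewrite /gcycle size_map (map_inj_uniq Some_inj) cycle_map. Qed.

Lemma cycle_edges_apex_cycle q : uniq q -> q != [::] ->
  cycle_edges (apex_cycle q) =i
    map apex_edge (path_ends q) ++ [seq Some @: E | E : {set V} <- path_edges q].
Proof.
case: q => [//|x s] uq _ E; rewrite cycle_edges_cons; last first.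
  by rewrite cons_uniq None_notin_map_Some (map_inj_uniq Some_inj).
rewrite -path_edges_map /= -cats1 pairmap_cat /= last_map.
rewrite /apex_edge [[set Some _; None]]setUC; apply: (perm_mem _ E).
by rewrite perm_cons perm_catC.
Qed.

Lemma path_ends_uniq q : simple_path q -> uniq (path_ends q).
Proof.
case: q => [//|x [//|y s]] /and3P [_ uq _] /=.
by rewrite inE andbT; apply: contraTneq uq => ->; rewrite /= mem_last.
Qed.

Definition apex_nbrs (c : seq (option V)) : {set V} := [set x | apex_edge x \in cycle_edges c].

Lemma apex_nbrs_apex_cycle q : simple_path q -> apex_nbrs (apex_cycle q) = [set x in path_ends q].
Proof.
move=> /[dup] pq /and3P [sq uq _]; apply/setP => x.
rewrite !inE cycle_edges_apex_cycle //; last by case: q sq {pq uq}.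
rewrite mem_cat (mem_map apex_edge_inj); case: mapP => [[E _ /eqP]|]; last by rewrite orbF.
by rewrite (negbTE (apex_edge_neq_lift x E)).
Qed.

Lemma apex_nbrs_disjoint c d :
  [disjoint cycle_edges c & cycle_edges d] -> [disjoint apex_nbrs c & apex_nbrs d].
Proof.
move=> cd; rewrite disjoint_subset; apply/subsetP => x.
by rewrite !inE => /(disjointFr cd) ->.
Qed.

Section UpperBound.
Hypothesis e_acyclic : forall c, ~~ gcycle e c.

Lemma gcycle_join_apex c : gcycle (join_K1 e) c ->
  exists2 q, simple_path q & cycle_edges c = cycle_edges (apex_cycle q).
Proof.
move=> gc; have uc : uniq c by case/and3P: gc.
have /rot_to [i c' def_c] : None \in c.
  apply: contraT => /map_Some_pmap def_c.
  by move: gc; rewrite def_c gcycle_map_Some (negbTE (e_acyclic _)).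
have /andP [Nc' _] : uniq (None :: c') by rewrite -def_c rot_uniq.
exists (pmap id c').
  rewrite -gcycle_apex_cycle /apex_cycle -map_Some_pmap // -def_c.
  by rewrite /gcycle size_rot rot_uniq rot_cycle.
by rewrite -(cycle_edges_rot i uc) def_c /apex_cycle -map_Some_pmap.
Qed.

Lemma card_apex_nbrs c : gcycle (join_K1 e) c -> #|apex_nbrs c| = 2.
Proof.
case/gcycle_join_apex => q pq Ec.
have -> : apex_nbrs c = apex_nbrs (apex_cycle q) by rewrite /apex_nbrs Ec.
rewrite apex_nbrs_apex_cycle // cardsE (card_uniqP (path_ends_uniq pq)).
by case: q pq {Ec}.
Qed.

Lemma card_bigcup_apex_nbrs cs : edge_disjoint_cycles (join_K1 e) cs ->
  #|\bigcup_(c <- cs) apex_nbrs c| = (size cs).*2.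
Proof.
elim: cs => [_|c cs IHcs [/andP [gc gcs] /andP [dc dcs]]]; first by rewrite big_nil cards0.
have disj : [disjoint apex_nbrs c & \bigcup_(d <- cs) apex_nbrs d].
  rewrite big_seq; elim/big_rec: _ => [|d U dcs' dU].
    by rewrite disjoints_subset setC0 subsetT.
  by rewrite disjoints_subset setCU subsetI -!disjoints_subset dU apex_nbrs_disjoint ?(allP dc).
by rewrite big_cons cardsU (disjoint_setI0 disj) cards0 subn0 card_apex_nbrs // IHcs.
Qed.

Lemma cycle_packing_le_half k : has_cycle_packing (join_K1 e) k -> k <= #|V| %/ 2.
Proof.
case=> cs [dcs <-]; rewrite leq_divRL // muln2 -(card_bigcup_apex_nbrs dcs).
exact: max_card.
Qed.

End UpperBound.

Lemma size_path_ends_flatten ps :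
  all simple_path ps -> size (flatten (map path_ends ps)) = (size ps).*2.
Proof.
elim: ps => //= q ps IHps /andP [+ /IHps sps]; rewrite size_cat sps.
by case: q => // x s _; rewrite doubleS.
Qed.

Lemma edge_disjoint_apex_cycles ps : all simple_path ps ->
  uniq (flatten (map path_edges ps)) -> uniq (flatten (map path_ends ps)) ->
  edge_disjoint_cycles (join_K1 e) (map apex_cycle ps).
Proof.
have apex_edgesE q : simple_path q -> cycle_edges (apex_cycle q) =i
    map apex_edge (path_ends q) ++ [seq Some @: E | E : {set V} <- path_edges q].
  by case/and3P => sq uq _; apply: cycle_edges_apex_cycle => //; case: q sq {uq}.
move=> sps uE uX; split.
  by rewrite all_map; apply/sub_all: sps => q; rewrite /= gcycle_apex_cycle.
rewrite pairwise_map; elim: ps sps uE uX => //= q ps IHps /andP [sq sps].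
rewrite !cat_uniq => /and3P [_ Eq_fresh uE] /and3P [_ Xq_fresh uX].
rewrite IHps // andbT; apply/allP => d dps.
rewrite /= (eq_disjoint (apex_edgesE q sq)) (eq_disjoint_r (apex_edgesE d (allP sps d dps))).
rewrite disjoint_subset; apply/subsetP => A /[!mem_cat].
case/orP => /mapP [x xq ->]; rewrite !inE mem_cat.
- rewrite (mem_map apex_edge_inj); apply/norP; split.
    by apply: contraNN Xq_fresh => xd; apply/hasP; exists x => //; apply/flatten_mapP; exists d.
  by apply/mapP => -[E _ /eqP]; rewrite (negbTE (apex_edge_neq_lift x E)).
- rewrite (mem_map (imset_inj Some_inj)); apply/norP; split.
    by apply/mapP => -[y _ /esym /eqP]; rewrite (negbTE (apex_edge_neq_lift y x)).
  by apply: contraNN Eq_fresh => xd; apply/hasP; exists x => //; apply/flatten_mapP; exists d.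
Qed.

Section LowerBound.
Hypothesis e_sym : symmetric e.

(* Read from right to left, [s] adds one vertex at a time, each new vertex
   adjacent to one listed before it. *)
Fixpoint growing (s : seq V) : bool :=
  if s is x :: s' then growing s' && (nilp s' || has (e x) s') else true.

Lemma path_exit_edge (s : seq V) x p : x \in s -> path e x p -> last x p \notin s ->
  exists u v, [/\ u \in s, v \notin s & e u v].
Proof.
elim: p x => [|y p IHp] x xs /=; first by rewrite xs.
case/andP => exy yp; case ys: (y \in s); first exact: IHp.
by exists x, y; rewrite ys.
Qed.

Lemma exists_growing k : connected e -> k <= #|V| ->
  exists s, [/\ uniq s, growing s & size s = k].
Proof.
move=> conn; elim: k => [_|k IHk lt_k]; first by exists [::].
have [s [us gs ss]] := IHk (ltnW lt_k).
have /subsetPn [y _ ys] : ~~ ([set: V] \subset s).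
  apply: contraTN lt_k => /subset_leq_card.
  by rewrite cardsT (card_uniqP us) ss -leqNgt.
case: s ys us gs ss => [|x s'] ys us gs ss; first by exists [:: y]; rewrite -ss.
have [p xp def_y] := connectP (conn x y); rewrite def_y in ys.
have [u [v [us' vs euv]]] := path_exit_edge (mem_head x s') xp ys.
exists [:: v, x & s']; split; rewrite ?cons_uniq ?vs -?ss //.
by apply/andP; split=> //; apply/orP; right; apply/hasP; exists u; rewrite // e_sym.
Qed.

Lemma simple_path_extend q p l : simple_path q -> p \in path_ends q -> l \notin q -> e l p ->
  exists q' o, [/\ simple_path q', {subset q' <= l :: q},
    perm_eq (path_edges q') ([set l; p] :: path_edges q),
    perm_eq (path_ends q) [:: p; o] & perm_eq (path_ends q') [:: l; o]].
Proof.
case: q => [//|a t] /and3P [sz uq pq] /[!inE] /orP [] /eqP -> lq elp.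
  exists [:: l, a & t], (last a t); split => //.
  by rewrite /simple_path /= inE lq elp -cons_uniq uq.
exists (rcons (a :: t) l), a; split.
- rewrite /simple_path size_rcons rcons_uniq lq uq /= rcons_path e_sym elp andbT.
  exact: pq.
- by move=> x; rewrite mem_rcons.
- rewrite /= -cats1 pairmap_cat /= perm_catC /=.
  by rewrite [[set last a t; l]]setUC.
- by rewrite /= -(perm_rcons a [:: last a t]).
- by rewrite /= last_rcons -(perm_rcons a [:: l]).
Qed.

Definition path_packing (s : seq V) (X : {set V}) (ps : seq (seq V)) :=
  [/\ all simple_path ps, {subset flatten ps <= s}, uniq (flatten (map path_edges ps)),
      uniq (flatten (map path_ends ps)) & flatten (map path_ends ps) =i X].

Lemma path_packing_perm s X ps ps' :
  perm_eq ps ps' -> path_packing s X ps -> path_packing s X ps'.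
Proof.
move=> pps [sps sub uE uX endsX].
have pflat f := perm_flatten (perm_map f pps).
split; first by rewrite -(perm_all _ pps).
- by move=> x; rewrite -(perm_mem (perm_flatten pps)); apply: sub.
- by rewrite -(perm_uniq (pflat _ path_edges)).
- by rewrite -(perm_uniq (pflat _ path_ends)).
- by move=> x; rewrite -(perm_mem (pflat _ path_ends)).
Qed.

Lemma path_packing_fresh s X ps l : path_packing s X ps -> l \notin s ->
  l \notin X /\ forall E, E \in flatten (map path_edges ps) -> l \notin E.
Proof.
move=> [_ sub _ _ endsX] ls.
have in_s q x : q \in ps -> x \in q -> x \in s.
  by move=> qps xq; apply: sub; apply/flattenP; exists q.
split.
  by rewrite -endsX; apply: contra ls => /flatten_mapP [q qps /mem_path_ends]; apply: in_s.
move=> E /flatten_mapP [q qps Eq]; apply: contra ls => lE.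
exact: in_s qps (mem_path_edges Eq lE).
Qed.

Lemma path_packing_add_edge s X ps l p : l \notin s -> p \in s -> e l p -> p \notin X ->
  path_packing s X ps -> path_packing (l :: s) (l |: (p |: X)) ([:: l; p] :: ps).
Proof.
move=> ls sp elp pX P; have [lX lE] := path_packing_fresh P ls.
case: P => sps sub uE uX endsX; have lp : l != p by apply: contraNneq ls => ->.
split => /=.
- by rewrite sps /simple_path /= inE lp elp.
- by move=> x /[!inE] /orP [-> // | /orP [/eqP -> | /sub ->]]; rewrite ?sp orbT.
- by rewrite uE andbT; apply: contraT => /negPn /lE; rewrite !inE eqxx.
- by rewrite !inE negb_or lp !endsX lX pX uX.
- by move=> x; rewrite !inE endsX.
Qed.

Lemma path_packing_extend s X ps l p : l \notin s -> e l p -> p \notin X ->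
  path_packing s (p |: X) ps -> exists ps', path_packing (l :: s) (l |: X) ps'.
Proof.
move=> ls elp pX P.
have [q qps pq] : exists2 q, q \in ps & p \in path_ends q.
  by apply/flatten_mapP; case: P => _ _ _ _ ->; rewrite setU11.
have {}P := path_packing_perm (perm_to_rem qps) P; set R := rem q ps in P.
have [lX lE] := path_packing_fresh P ls.
case: P => /= /andP [sq sR] sub uE uX endsX.
have lq : l \notin q by apply: contra ls => lq; apply: sub; rewrite mem_cat lq.
have [q' [o [sq' sub' Eq' Xq Xq']]] := simple_path_extend sq pq lq elp.
have {}uX : uniq [:: p, o & flatten (map path_ends R)].
  by rewrite -(perm_uniq (perm_cat Xq (perm_refl _))).
have {}endsX : [:: p, o & flatten (map path_ends R)] =i p |: X.
  by move=> x; rewrite -(perm_mem (perm_cat Xq (perm_refl _))).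
exists (q' :: R); split => /=.
- by rewrite sq' sR.
- move=> x; rewrite in_cons mem_cat => /orP [/sub'|xR].
    by rewrite in_cons => /orP [-> // | xq]; rewrite sub ?orbT // mem_cat xq.
  by rewrite sub ?orbT // mem_cat xR orbT.
- rewrite (perm_uniq (perm_cat Eq' (perm_refl _))) /= uE andbT.
  by apply: contraT => /negPn /lE; rewrite !inE eqxx.
- rewrite (perm_uniq (perm_cat Xq' (perm_refl _))) /=.
  move: lX; rewrite -endsX in_cons negb_or => /andP [_ ->].
  by case/andP: uX.
- move=> x; rewrite (perm_mem (perm_cat Xq' (perm_refl _))) !inE; case: eqP => //= _.
  have := endsX x; rewrite !inE; case: (eqVneq x p) => [-> _ | //].
  case/andP: uX; rewrite !inE negb_or => /andP [/negbTE -> /negbTE ->] _.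
  by rewrite (negbTE pX).
Qed.

Lemma exists_path_packing s X : uniq s -> growing s -> {subset X <= s} -> ~~ odd #|X| ->
  exists ps, path_packing s X ps.
Proof.
elim: s X => [|l s IHs] X.
  by move=> _ _ sX _; exists [::]; split => // x; apply/esym/negP => /sX.
move=> /andP [ls us] /andP [gs hs] sX eX.
have sub_s (Y : {set V}) : {subset Y <= X} -> l \notin Y -> {subset Y <= s}.
  by move=> YX lY x xY; move: (sX x (YX x xY)) lY; rewrite inE => /orP [/eqP <-|//]; rewrite xY.
case lX: (l \in X); last first.
  have [ps [sps sub uE uX endsX]] := IHs X us gs (sub_s X (fun x => id) (negbT lX)) eX.
  by exists ps; split => // x /sub xs; rewrite inE xs orbT.
have [p sp elp] : exists2 p, p \in s & e l p.
  case/orP: hs => [/nilP s0|/hasP //]; move: eX; suff -> : X = [set l] by rewrite cards1.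
  by apply/setP => x; rewrite inE; apply/idP/eqP => [/sX|->//]; rewrite s0 inE => /eqP.
have lp : l != p by apply: contraNneq ls => ->.
have cardX : #|X| = (#|X :\ l|).+1 by rewrite (cardsD1 l X) lX.
case pX: (p \in X).
  have pY : p \notin X :\ l :\ p by rewrite !inE eqxx.
  have [ps P] : exists ps, path_packing s (X :\ l :\ p) ps.
    apply: IHs => //.
      by apply: sub_s => [x /setD1P [_ /setD1P []] //|]; rewrite !inE eqxx andbF.
    by move: eX; rewrite cardX (cardsD1 p (X :\ l)) !inE eq_sym lp pX /= negbK.
  exists ([:: l; p] :: ps); have := path_packing_add_edge ls sp elp pY P.
  by rewrite !setD1K // !inE eq_sym lp pX.
have pXl : p \notin X :\ l by rewrite !inE pX andbF.
have [ps P] : exists ps, path_packing s (p |: (X :\ l)) ps.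
  apply: IHs => //; last by move: eX; rewrite cardX cardsU1 pXl.
  move=> x /setU1P [-> // | /setD1P [xl xX]].
  by move: (sX x xX); rewrite inE (negbTE xl).
by have := path_packing_extend ls elp pXl P; rewrite setD1K.
Qed.

Lemma cycle_packing_half : connected e -> has_cycle_packing (join_K1 e) (#|V| %/ 2).
Proof.
move=> conn; have [s [us gs ss]] := exists_growing conn (leqnn #|V|).
pose X := [set x in drop (odd #|V|) s].
have cardX : #|X| = (#|V| %/ 2).*2.
  rewrite cardsE (card_uniqP (drop_uniq _ us)) size_drop ss.
  by rewrite -{1}(odd_double_half #|V|) addKn divn2.
have [ps [sps _ uE uX endsX]] : exists ps, path_packing s X ps.
  apply: exists_path_packing => //; last by rewrite cardX odd_double.
  by move=> x; rewrite inE => /mem_drop.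
exists (map apex_cycle ps); split; first exact: edge_disjoint_apex_cycles.
apply: double_inj; rewrite size_map -(size_path_ends_flatten sps) -cardX.
by rewrite -(eq_card endsX); apply/esym/card_uniqP.
Qed.

End LowerBound.

End ApexCycles.

Theorem corollary2p1 (V : finType) (e : rel V) :
  is_tree e -> is_phi (join_K1 e) (#|V| %/ 2).
Proof.
case=> [[e_sym _] _ conn e_acyclic]; split; first exact: cycle_packing_half.
by move=> k; apply: cycle_packing_le_half.
Qed.
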